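(* Let $d\ge 2$, let $\mathcal{K}=\{k_1,\ldots,k_r\}\subset\{1,\ldots,d-1\}$ (with $k_1,\ldots,k_r$ distinct) and $t\in\mathbb{N}_0$ be such that $\min\{k_1,d-k_1\}\ge\min\{k_2,d-k_2\}\ge\cdots\ge\min\{k_r,d-k_r\}$. Then, with $s:=\min\{t+1,|\mathcal{K}|\}$, $$\dim\big(\mathrm{Pol}_t(\mathcal{G}_{\mathcal{K},d})\big)\ \ge\ \sum_{i=1}^{s}\dim\big(\mathrm{Pol}_{t-i+1}(\mathcal{G}_{k_i,d})\big).$$
   Context: $\mathbb{R}^{d\times d}_{\mathrm{sym}}$ denotes the real symmetric $d\times d$ matrices. For $1\le k\le d-1$, the Grassmannian is $\mathcal{G}_{k,d}=\{P\in\mathbb{R}^{d\times d}_{\mathrm{sym}}:P^2=P,\ \mathrm{Tr}(P)=k\}$, and for nonempty $\mathcal{K}\subset\{1,\ldots,d-1\}$, $\mathcal{G}_{\mathcal{K},d}=\bigcup_{k\in\mathcal{K}}\mathcal{G}_{k,d}$. $\mathrm{Pol}_t(\mathbb{R}^{d\times d}_{\mathrm{sym}})$ is the space of real polynomials of total degree at most $t$ in the matrix entries, and for a subset $M\subset\mathbb{R}^{d\times d}_{\mathrm{sym}}$ (such as $\mathcal{G}_{k,d}$ or $\mathcal{G}_{\mathcal{K},d}$), $\mathrm{Pol}_t(M)=\{f|_M: f\in\mathrm{Pol}_t(\mathbb{R}^{d\times d}_{\mathrm{sym}})\}$. *)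

(* Real numbers are modelled by an arbitrary real closed field R. *)
From HB Require Import structures.
From mathcomp Require Import all_boot all_order all_algebra.
From Stdlib Require Import ClassicalEpsilon.
Set Implicit Arguments. Unset Strict Implicit. Unset Printing Implicit Defensive.
Import Order.TTheory GRing.Theory Num.Theory.
Local Open Scope ring_scope.

Definition decP (P : Prop) : bool :=
  if excluded_middle_informative P then true else false.

Section Pol.
Variables (R : rcfType) (d : nat).

(* exponent vectors for monomials in the d*d matrix entries, each exponent <= t *)
Definition expo (t : nat) := {ffun 'I_d * 'I_d -> 'I_t.+1}.

Definition monom (t : nat) (e : expo t) (A : 'M[R]_d) : R :=
  \prod_(p : 'I_d * 'I_d) A p.1 p.2 ^+ (e p : nat).

Definition expo_deg (t : nat) (e : expo t) : nat := (\sum_(p : 'I_d * 'I_d) (e p : nat))%N.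

Definition is_pol (t : nat) (f : 'M[R]_d -> R) : Prop :=
  exists c : expo t -> R,
    forall A, f A = \sum_(e : expo t | (expo_deg e <= t)%N) c e * monom e A.

Definition indep_on (M : 'M[R]_d -> Prop) (t n : nat) (f : 'I_n -> 'M[R]_d -> R) : Prop :=
  (forall i, is_pol t (f i)) /\
  forall c : 'I_n -> R,
    (forall A, M A -> \sum_(i < n) c i * f i A = 0) -> forall i, c i = 0.

(* dim Pol_t(M): the maximal number of elements of Pol_t whose restrictions to M
   are linearly independent.  The bound (t+1)^(d*d) (>= number of monomials of
   degree <= t) is never binding. *)
Definition dimPol (M : 'M[R]_d -> Prop) (t : nat) : nat :=
  (\max_(n < (t.+1 ^ (d * d)).+1 | decP (exists f : 'I_n -> 'M[R]_d -> R, indep_on M t f)) (n : nat))%N.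

(* Grassmannian G_{k,d} inside the symmetric matrices *)
Definition Grass (k : nat) (P : 'M[R]_d) : Prop :=
  P^T = P /\ P *m P = P /\ \tr P = k%:R.

Definition GrassK (K : seq nat) (P : 'M[R]_d) : Prop :=
  exists2 k, k \in K & Grass k P.

End Pol.

(* Multiplying polynomials of degree t - j by q(A) := prod_{l in L} (tr A - l),
   where |L| = j, gives polynomials of degree t that vanish on every G_{l,d}
   with l in L, while on G_{k,d} with k not in L the factor q is a nonzero
   constant, so independence there is preserved.  Adding k_1, k_2, ... one at a
   time, with L the ranks already added, a family independent on the earlier
   Grassmannians together with such a multiplied family is independent on the
   union. *)
From Pilot Require Import Defs.
From HB Require Import structures.
From mathcomp Require Import all_boot all_order all_algebra.
From Stdlib Require Import ClassicalEpsilon.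
Set Implicit Arguments. Unset Strict Implicit. Unset Printing Implicit Defensive.
Import Order.TTheory GRing.Theory Num.Theory.

Section PolynomialFunctions.
Local Open Scope ring_scope.
Variables (R : rcfType) (d : nat).
Implicit Types (s : nat) (f g : 'M[R]_d -> R).

Lemma is_pol_ext s f g : (forall A, f A = g A) -> is_pol s f -> is_pol s g.
Proof. by move=> fg [c hc]; exists c => A; rewrite -fg. Qed.

Lemma is_pol0 s : is_pol s (fun _ : 'M[R]_d => 0).
Proof. by exists (fun _ => 0) => A; rewrite big1 // => e _; rewrite mul0r. Qed.

Lemma is_polD s f g : is_pol s f -> is_pol s g -> is_pol s (fun A => f A + g A).
Proof.
move=> [c hc] [c' hc']; exists (fun e => c e + c' e) => A.
by rewrite hc hc' -big_split; apply: eq_bigr => e _; rewrite mulrDl.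
Qed.

Lemma is_polZ s a f : is_pol s f -> is_pol s (fun A => a * f A).
Proof.
move=> [c hc]; exists (fun e => a * c e) => A.
by rewrite hc mulr_sumr; apply: eq_bigr => e _; rewrite mulrA.
Qed.

Lemma is_pol_sum s n (F : 'I_n -> 'M[R]_d -> R) :
  (forall i, is_pol s (F i)) -> is_pol s (fun A => \sum_(i < n) F i A).
Proof.
elim: n F => [|n IH] F hF.
  by apply: is_pol_ext (is_pol0 s) => A; rewrite big_ord0.
have hFl := IH (fun i => F (widen_ord (leqnSn n) i)) (fun i => hF _).
by apply: is_pol_ext (is_polD hFl (hF ord_max)) => A; rewrite big_ord_recr.
Qed.

Lemma is_pol_mul_reindex s s' (phi : expo d s -> expo d s') g f :
  (forall e, (expo_deg e <= s)%N -> (expo_deg (phi e) <= s')%N) ->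
  (forall e A, monom (phi e) A = g A * monom e A) ->
  is_pol s f -> is_pol s' (fun A => g A * f A).
Proof.
move=> hdeg hmon [c hc].
exists (fun e' => \sum_(e | (expo_deg e <= s)%N && (phi e == e')) c e) => A.
rewrite hc mulr_sumr.
under [RHS]eq_bigr do rewrite mulr_suml.
rewrite -(exchange_big_dep (fun e : expo d s' => expo_deg e <= s')%N) /=; last first.
  by move=> e e' he /eqP <-; apply: hdeg.
apply: eq_bigr => e he.
rewrite (big_pred1 (phi e)) => [|e' /=]; last by rewrite eq_sym.
by rewrite hmon mulrCA.
Qed.

Lemma is_polS s f : is_pol s f -> is_pol s.+1 f.
Proof.
pose phi (e : expo d s) : expo d s.+1 := [ffun p => widen_ord (leqnSn _) (e p)].
have deg_phi e : expo_deg (phi e) = expo_deg e.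
  by apply: eq_bigr => p _; rewrite ffunE.
move=> /(is_pol_mul_reindex (phi := phi) (g := fun _ => 1)) hf.
apply: is_pol_ext (hf _ _) => [A||e A]; first by rewrite mul1r.
  by move=> e he; rewrite deg_phi leqW.
by rewrite mul1r; apply: eq_bigr => p _; rewrite ffunE.
Qed.

Lemma is_pol_entryM s (i j : 'I_d) f :
  is_pol s f -> is_pol s.+1 (fun A : 'M[R]_d => A i j * f A).
Proof.
pose bump (e : expo d s) p := (e p + (p == (i, j)))%N.
have bump_lt e p : (bump e p < s.+2)%N.
  by apply: leq_ltn_trans (leq_add (leq_ord (e p)) (leq_b1 _)) _; rewrite addn1.
apply: (@is_pol_mul_reindex s s.+1 (fun e => [ffun p => inord (bump e p)])).
- move=> e he; rewrite /expo_deg.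
  under eq_bigr do rewrite ffunE inordK ?bump_lt //.
  rewrite big_split /=.
  have -> : (\sum_(p : 'I_d * 'I_d) (p == (i, j)) = 1)%N.
    by rewrite (bigD1 (i, j)) //= eqxx big1 // => p /negbTE ->.
  by rewrite addn1.
- move=> e A; rewrite /monom.
  under eq_bigr do rewrite ffunE inordK ?bump_lt // exprD.
  rewrite big_split /= mulrC (bigD1 (i, j)) //= eqxx expr1 big1 ?mulr1 //.
  by move=> p /negbTE ->; rewrite expr0.
Qed.

Lemma is_pol_trace_subM s (k : nat) f :
  is_pol s f -> is_pol s.+1 (fun A : 'M[R]_d => (\tr A - k%:R) * f A).
Proof.
move=> hf.
have htr := is_pol_sum (fun m : 'I_d => is_pol_entryM m m hf).
apply: is_pol_ext (is_polD htr (is_polZ (- k%:R) (is_polS hf))) => A.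
by rewrite mulrBl /mxtrace mulr_suml mulNr.
Qed.

Lemma is_pol_prod_trace_subM s (ls : seq nat) f :
  is_pol s f ->
  is_pol (s + size ls) (fun A : 'M[R]_d => (\prod_(l <- ls) (\tr A - l%:R)) * f A).
Proof.
elim: ls s f => [|l ls IH] s f hf.
  by rewrite addn0; apply: is_pol_ext hf => A; rewrite big_nil mul1r.
rewrite /= -addSnnS.
by apply: is_pol_ext (IH _ _ (is_pol_trace_subM l hf)) => A; rewrite big_cons mulrCA mulrA.
Qed.

End PolynomialFunctions.

Section Independence.
Local Open Scope ring_scope.
Variables (R : rcfType) (d : nat).
Implicit Types (M U V : 'M[R]_d -> Prop) (t : nat).

Lemma indep_on0 M t (f : 'I_0 -> 'M[R]_d -> R) : indep_on M t f.
Proof. by split=> [[]|c _ []]. Qed.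

Lemma indep_on_sub M M' t n (f : 'I_n -> 'M[R]_d -> R) :
  (forall A, M A -> M' A) -> indep_on M t f -> indep_on M' t f.
Proof. by move=> hM [hp hi]; split=> // c hc; apply: hi => A /hM; apply: hc. Qed.

Lemma indep_on_cat U V t a b (F : 'I_a -> 'M[R]_d -> R) (G : 'I_b -> 'M[R]_d -> R) :
  indep_on U t F -> indep_on V t G -> (forall i A, U A -> G i A = 0) ->
  indep_on (fun A => U A \/ V A) t
    (fun k : 'I_(a + b) => match split k with inl i => F i | inr i => G i end).
Proof.
move=> [hFp hF] [hGp hG] hGU; split=> [k|c hc]; first by case: (split k).
have hsum A : U A \/ V A ->
    \sum_(i < a) c (lshift b i) * F i A + \sum_(i < b) c (rshift a i) * G i A = 0.
  move=> hA; rewrite -[RHS](hc A hA) big_split_ord.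
  by congr (_ + _); apply: eq_bigr => i _; rewrite ?(unsplitK (inl i)) ?(unsplitK (inr i)).
have cl i : c (lshift b i) = 0.
  move: i; apply: hF => A hA; have := hsum A (or_introl hA).
  by rewrite [X in _ + X]big1 ?addr0 // => i' _; rewrite hGU // mulr0.
have cr i : c (rshift a i) = 0.
  move: i; apply: hG => A hA; have := hsum A (or_intror hA).
  by rewrite [X in X + _]big1 ?add0r // => i' _; rewrite cl mul0r.
by move=> k; rewrite -(splitK k); case: (split k) => i /=; [exact: cl | exact: cr].
Qed.

Lemma card_expo t : #|{: expo d t}| = (t.+1 ^ (d * d))%N.
Proof. by rewrite card_ffun card_prod !card_ord. Qed.

(* More functions than exponent vectors are dependent: the matrix of their
   coefficients has a nonzero left kernel. *)
Lemma indep_on_size M t n (f : 'I_n -> 'M[R]_d -> R) :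
  indep_on M t f -> (n <= t.+1 ^ (d * d))%N.
Proof.
move=> [hp hi]; have [c hc] := fin_all_exists hp.
rewrite -card_expo leqNgt; apply/negP => hlt.
pose C := \matrix_(i < n, j < #|{: expo d t}|)
  (if (expo_deg (enum_val j) <= t)%N then c i (enum_val j) else 0).
have : kermx C != 0.
  by rewrite -mxrank_eq0 -lt0n mxrank_ker subn_gt0 (leq_ltn_trans (rank_leq_col C)).
move/negP; apply; apply/eqP/row_matrixP => i; rewrite row0.
set v := row i (kermx C).
have vC0 : v *m C = 0 by apply/sub_kermxP; exact: row_sub.
suff v0 : forall k, v 0 k = 0 by apply/rowP => k; rewrite v0 mxE.
apply: hi => A _.
under eq_bigr do rewrite hc mulr_sumr.
rewrite exchange_big /= big1 // => e he.
have vCe : \sum_k v 0 k * c k e = 0.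
  have : (v *m C) 0 (enum_rank e) = 0 by rewrite vC0 mxE.
  by rewrite mxE; under eq_bigr do rewrite [C _ _]mxE enum_rankK he.
by under eq_bigr do rewrite mulrA; rewrite -mulr_suml vCe mul0r.
Qed.

End Independence.

Section Dimension.
Local Open Scope ring_scope.
Variables (R : rcfType) (d : nat).
Implicit Types (M : 'M[R]_d -> Prop) (t : nat).

Lemma decPP (P : Prop) : reflect P (Defs.decP P).
Proof. by rewrite /Defs.decP; case: excluded_middle_informative => h; [left | right]. Qed.

Lemma dimPol_witness M t : exists f : 'I_(dimPol M t) -> 'M[R]_d -> R, indep_on M t f.
Proof.
have ex0 : Defs.decP (exists f : 'I_0 -> 'M[R]_d -> R, indep_on M t f).
  by apply/decPP; exists (fun _ _ => 0); apply: indep_on0.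
rewrite /dimPol (bigop.bigmax_eq_arg (ord0 : 'I_(t.+1 ^ (d * d)).+1)) //.
by case: arg_maxnP => // i /decPP.
Qed.

Lemma dimPol_max M t n (f : 'I_n -> 'M[R]_d -> R) : indep_on M t f -> (n <= dimPol M t)%N.
Proof.
move=> hf; have hn : (n < (t.+1 ^ (d * d)).+1)%N by rewrite ltnS (indep_on_size hf).
by apply: (bigop.leq_bigmax_cond (F := fun i => nat_of_ord i) (Ordinal hn)); apply/decPP; exists f.
Qed.

Lemma dimPol_sub M M' t : (forall A, M A -> M' A) -> (dimPol M t <= dimPol M' t)%N.
Proof. by move=> hM; have [f hf] := dimPol_witness M t; apply/dimPol_max/(indep_on_sub hM hf). Qed.

End Dimension.

Section GrassmannianUnion.
Local Open Scope ring_scope.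
Variables (R : rcfType) (d : nat).

Lemma indep_on_Grass_prod_trace_subM k (ls : seq nat) s n (F : 'I_n -> 'M[R]_d -> R) :
  k \notin ls -> indep_on (@Grass R d k) s F ->
  indep_on (@Grass R d k) (s + size ls)
    (fun i A => (\prod_(l <- ls) (\tr A - l%:R)) * F i A).
Proof.
move=> kNls [F_pol F_indep]; split=> [i|c hc]; first exact/is_pol_prod_trace_subM/F_pol.
apply: F_indep => A hA.
have q_neq0 : \prod_(l <- ls) (\tr A - l%:R) != 0.
  have [_ [_ ->]] := hA; rewrite prodf_seq_neq0; apply/allP => l lls.
  by rewrite subr_eq0 eqr_nat; apply: contraNN kNls => /eqP ->.
have /= := hc A hA; under eq_bigr do rewrite mulrCA.
by rewrite -mulr_sumr => /eqP; rewrite mulf_eq0 (negbTE q_neq0) => /eqP.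
Qed.

Lemma dimPol_GrassK_rcons (ks : seq nat) k t :
  k \notin ks -> (size ks <= t)%N ->
  (dimPol (@GrassK R d ks) t + dimPol (@Grass R d k) (t - size ks)
     <= dimPol (@GrassK R d (rcons ks k)) t)%N.
Proof.
move=> kNks hks.
have [F hF] := dimPol_witness (@GrassK R d ks) t.
have [G hG] := dimPol_witness (@Grass R d k) (t - size ks).
have := indep_on_Grass_prod_trace_subM kNks hG; rewrite subnK // => hqG.
have qG_vanish i A : GrassK ks A -> (\prod_(l <- ks) (\tr A - l%:R)) * G i A = 0.
  move=> [l lks [_ [_ trA]]]; apply/eqP; rewrite mulf_eq0 prodf_seq_eq0 trA.
  by apply/orP; left; apply/hasP; exists l; rewrite //= subrr.
apply: dimPol_max (indep_on_sub _ (indep_on_cat hF hqG qG_vanish)).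
move=> A [[l lks hA] | hA]; last by exists k; rewrite ?mem_rcons ?mem_head.
by exists l; rewrite ?mem_rcons ?in_cons ?lks ?orbT.
Qed.

Lemma dimPol_GrassK_sum (ks : seq nat) t :
  uniq ks -> (size ks <= t.+1)%N ->
  (\sum_(i < size ks) dimPol (@Grass R d (nth 0%N ks i)) (t - i)
     <= dimPol (@GrassK R d ks) t)%N.
Proof.
elim/last_ind: ks => [|ks k IH]; first by rewrite big_ord0.
rewrite rcons_uniq size_rcons ltnS => /andP [kNks uks] hks.
rewrite big_ord_recr /= nth_rcons ltnn eqxx.
apply: leq_trans (dimPol_GrassK_rcons kNks hks); rewrite leq_add2r.
under eq_bigr => i _ do rewrite nth_rcons ltn_ord.
exact: IH uks (leqW hks).
Qed.

End GrassmannianUnion.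

Theorem mainTheorem5 (R : rcfType) (d : nat) (ks : seq nat) (t : nat) :
  (2 <= d)%N ->
  (0 < size ks)%N ->
  uniq ks ->
  all (fun k => (1 <= k) && (k <= d - 1)) ks ->
  sorted (fun a b => minn b (d - b) <= minn a (d - a))%N ks ->
  (\sum_(i < minn t.+1 (size ks))
      dimPol (@Grass R d (nth 0%N ks i)) (t - i)
   <= dimPol (@GrassK R d ks) t)%N.
Proof.
move=> _ _ uks _ _.
set s := minn t.+1 (size ks).
have size_take_s : size (take s ks) = s.
  by rewrite size_take_min; apply/minn_idPl/geq_minr.
apply: (@leq_trans (dimPol (@GrassK R d (take s ks)) t)); last first.
  by apply: dimPol_sub => A [k /mem_take kks hA]; exists k.
have := dimPol_GrassK_sum R d (t := t) (take_uniq s uks).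
rewrite size_take_s geq_minl => /(_ isT).
by under eq_bigr => i _ do rewrite nth_take //.
Qed.
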